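(* Let $A\in\mathbb{R}^{2\times2}$ be diagonalizable (over $\mathbb{C}$) and let $p\in\{1,\infty\}$. Then there exists an invertible $W\in\mathbb{R}^{2\times 2}$ such that the linear vector field $x\mapsto Ax$ is WIC with respect to the weighted norm $x\mapsto\|Wx\|_p$ (equivalently, $\mu_p(WAW^{-1})\le 0$) if and only if every eigenvalue of $A$ lies in the cone $\{\alpha+\beta i:\ \alpha\le 0,\ |\beta|\le-\alpha\}$.
   Context: For $x\in\mathbb{R}^2$, $\|x\|_1=|x_1|+|x_2|$ and $\|x\|_\infty=\max(|x_1|,|x_2|)$. The matrix measure of $B\in\mathbb{R}^{2\times2}$ is $\mu_p(B)=\lim_{h\to0^+}\frac{\|I+hB\|_p-1}{h}$ (induced matrix norm); explicitly $\mu_1(B)=\max_j\big(b_{jj}+\sum_{i\ne j}|b_{ij}|\big)$ and $\mu_\infty(B)=\max_i\big(b_{ii}+\sum_{j\ne i}|b_{ij}|\big)$. A vector field $f$ is weakly infinitesimally contracting (WIC) with respect to a norm if $\sup_x \mu(Df(x))\le 0$ for the matrix measure $\mu$ associated to that norm; for the weighted norm $\|Wx\|_p$ and $f(x)=Ax$ this means $\mu_p(WAW^{-1})\le 0$. *)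

From HB Require Import structures.
From mathcomp Require Import all_boot all_order all_algebra.
From mathcomp Require Import complex.
Set Implicit Arguments. Unset Strict Implicit. Unset Printing Implicit Defensive.
Import Order.TTheory GRing.Theory Num.Theory.
Local Open Scope ring_scope.

Inductive pIndex := P1 | PInf.

(* Matrix measure mu_1 of a 2x2 matrix (max column sum, diagonal entry signed). *)
Definition mu1 (R : realDomainType) (B : 'M[R]_2) : R :=
  Num.max (B 0 0 + `|B 1 0|) (B 1 1 + `|B 0 1|).

(* Matrix measure mu_infinity of a 2x2 matrix (max row sum, diagonal entry signed). *)
Definition muInf (R : realDomainType) (B : 'M[R]_2) : R :=
  Num.max (B 0 0 + `|B 0 1|) (B 1 1 + `|B 1 0|).

Definition mu (R : realDomainType) (p : pIndex) (B : 'M[R]_2) : R :=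
  match p with P1 => mu1 B | PInf => muInf B end.

Definition WIC_weighted (R : realFieldType) (p : pIndex) (W A : 'M[R]_2) : Prop :=
  mu p (W *m A *m invmx W) <= 0.

Definition in_cone (R : realFieldType) (z : R[i]) : Prop :=
  complex.Re z <= 0 /\ `|complex.Im z| <= - complex.Re z.

Definition complexify (R : realFieldType) (A : 'M[R]_2) : 'M[R[i]]_2 :=
  map_mx (real_complex R) A.

From HB Require Import structures.
From mathcomp Require Import all_boot all_order all_algebra.
From mathcomp Require Import complex.
From mathcomp Require Import ring lra.
Set Implicit Arguments. Unset Strict Implicit. Unset Printing Implicit Defensive.
Import Order.TTheory GRing.Theory Num.Theory.
Local Open Scope ring_scope.

(* Similarity preserves the trace t and the determinant D, and mu_p(B) <= 0
   forces t <= 0, 0 <= D and 2 D <= t^2 (because |b c| <= a d); these three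
   inequalities confine the roots of z^2 - t z + D to the cone.  Conversely,
   a real 2x2 matrix with eigenvalues in the cone and distinct eigenvalues is
   similar over R either to diag(l1, l2) with l1, l2 <= 0 or to
   [[x, y], [-y, x]] with x + |y| <= 0, and both p-measures of these normal
   forms are max(l1, l2), resp. x + |y|.  A double eigenvalue of a
   diagonalizable matrix makes it scalar, hence already diagonal. *)

Definition mx22 (T : Type) (a b c d : T) : 'M[T]_2 :=
  \matrix_(i, j) if i == 0 :> nat then if j == 0 :> nat then a else b
                 else if j == 0 :> nat then c else d.

Lemma mx22K (T : Type) (A : 'M[T]_2) : mx22 (A 0 0) (A 0 1) (A 1 0) (A 1 1) = A.
Proof.
by apply/matrixP => -[[|[|//]] i] [[|[|//]] j]; rewrite mxE; congr (A _ _); apply: val_inj.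
Qed.

Lemma mulmx22 (R : pzSemiRingType) (a b c d x y z w : R) :
  mx22 a b c d *m mx22 x y z w =
  mx22 (a * x + b * z) (a * y + b * w) (c * x + d * z) (c * y + d * w).
Proof.
by apply/matrixP => -[[|[|//]] i] [[|[|//]] j];
  rewrite !mxE !big_ord_recl big_ord0 addr0 !mxE.
Qed.

Lemma mxtrace2 (R : pzSemiRingType) (A : 'M[R]_2) : \tr A = A 0 0 + A 1 1.
Proof.
by rewrite /mxtrace !big_ord_recl big_ord0 addr0; congr (_ + A _ _); apply: val_inj.
Qed.

Lemma det2 (R : comPzRingType) (A : 'M[R]_2) : \det A = A 0 0 * A 1 1 - A 0 1 * A 1 0.
Proof.
have l01 : lift 0 (0 : 'I_1) = 1 :> 'I_2 by apply: val_inj.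
have l10 : lift 1 (0 : 'I_1) = 0 :> 'I_2 by apply: val_inj.
rewrite (expand_det_row _ 0) !big_ord_recl big_ord0 addr0 /cofactor !det_mx11 !mxE /=.
rewrite !l01 l10 expr0 expr1.
ring.
Qed.

Lemma unitmx22 (F : fieldType) (a b c d : F) :
  (mx22 a b c d \in unitmx) = (a * d - b * c != 0).
Proof. by rewrite unitmxE det2 !mxE unitfE. Qed.

Lemma mxtrace_conj (F : fieldType) n (W A : 'M[F]_n) :
  W \in unitmx -> \tr (W *m A *m invmx W) = \tr A.
Proof. by move=> Wu; rewrite mxtrace_mulC mulmxA mulVmx // mul1mx. Qed.

Lemma det_conj (F : fieldType) n (W A : 'M[F]_n) :
  W \in unitmx -> \det (W *m A *m invmx W) = \det A.
Proof. by move=> Wu; rewrite !det_mulmx det_inv mulrAC mulrV ?mul1r -?unitmxE. Qed.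

Lemma mxtrace_map (R S : pzRingType) (f : {additive R -> S}) n (A : 'M[R]_n) :
  \tr (map_mx f A) = f (\tr A).
Proof. by rewrite /mxtrace raddf_sum; apply: eq_bigr => i _; rewrite mxE. Qed.

Lemma char_poly2 (R : comNzRingType) (A : 'M[R]_2) :
  char_poly A = 'X^2 - (\tr A)%:P * 'X + (\det A)%:P.
Proof.
rewrite /char_poly det2 mxtrace2 det2 !mxE /= !mulr1n !mulr0n.
ring.
Qed.

Lemma eigenvalue2 (F : fieldType) (A : 'M[F]_2) z :
  eigenvalue A z = (z ^+ 2 - \tr A * z + \det A == 0).
Proof. by rewrite eigenvalue_root_char /root char_poly2 !hornerE. Qed.

Lemma eigenvalue_complexify (R : rcfType) (A : 'M[R]_2) (z : R[i]) :
  eigenvalue (complexify A) z = (z ^+ 2 - (\tr A)%:C%C * z + (\det A)%:C%C == 0).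
Proof. by rewrite eigenvalue2 mxtrace_map det_map_mx. Qed.

Lemma trace_det_bounds (R : realDomainType) (a b c d : R) :
  a + `|c| <= 0 -> d + `|b| <= 0 ->
  [/\ a + d <= 0, 0 <= a * d - b * c & 2 * (a * d - b * c) <= (a + d) ^+ 2].
Proof.
move=> hac hdb.
have hbc : `|b| * `|c| <= d * a by rewrite -[d * a]mulrNN ler_pM ?normr_ge0 //; lra.
have hbcl : - (b * c) <= `|b| * `|c| by rewrite -normrM -normrN ler_norm.
have hbcu : b * c <= `|b| * `|c| by rewrite -normrM ler_norm.
have := normr_ge0 b; have := normr_ge0 c; have := sqr_ge0 (a - d).
split; nra.
Qed.

Lemma mu_nonpos_trace_det (R : realDomainType) p (B : 'M[R]_2) :
  mu p B <= 0 -> [/\ \tr B <= 0, 0 <= \det B & 2 * \det B <= \tr B ^+ 2].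
Proof.
rewrite mxtrace2 det2; case: p => /=; rewrite /mu1 /muInf ge_max => /andP[h1 h2].
  exact: trace_det_bounds.
by rewrite [B 0 1 * _]mulrC; apply: trace_det_bounds.
Qed.

Lemma mu_diag_mx22 (R : realDomainType) p (l1 l2 : R) :
  mu p (mx22 l1 0 0 l2) = Num.max l1 l2.
Proof. by case: p; rewrite /= /mu1 /muInf !mxE /= normr0 !addr0. Qed.

Lemma mu_rotation_mx22 (R : realDomainType) p (x y : R) :
  mu p (mx22 x y (- y) x) = x + `|y|.
Proof. by case: p; rewrite /= /mu1 /muInf !mxE /= normrN maxxx. Qed.

Lemma root_in_cone (R : rcfType) (t D : R) (z : R[i]) :
  t <= 0 -> 0 <= D -> 2 * D <= t ^+ 2 ->
  z ^+ 2 - t%:C%C * z + D%:C%C = 0 -> in_cone z.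
Proof.
case: z => x y ht hD htD /eqP; rewrite eq_complex /= => /andP[/eqP hre /eqP him].
rewrite /in_cone /=.
have : y * (2 * x - t) = 0 by rewrite -him; ring.
move/eqP; rewrite mulf_eq0 => /orP[/eqP y0 | /eqP/subr0_eq tx].
  by rewrite y0 normr0; split; nra.
have hx : x <= 0 by lra.
split => //; rewrite -ler_sqr ?nnegrE ?normr_ge0 ?oppr_ge0 // real_normK ?num_real //.
rewrite sqrrN; nra.
Qed.

(* For a root l of the characteristic polynomial, (b, l - a) and (l - d, c)
   are, up to sign, the columns of adj (A - l), which A - l kills since
   det (A - l) = 0; so they are eigenvectors for l. *)
Lemma mx22_diagonalize_row0 (R : comPzRingType) (a b c d l1 l2 : R) :
  a + d = l1 + l2 -> a * d - b * c = l1 * l2 ->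
  mx22 a b c d *m mx22 b b (l1 - a) (l2 - a) =
  mx22 b b (l1 - a) (l2 - a) *m mx22 l1 0 0 l2.
Proof.
move=> ht hD; have hd : d = l1 + l2 - a by rewrite -ht addrAC subrr add0r.
subst d; have hbc : b * c = a * (l1 + l2 - a) - l1 * l2 by rewrite -hD; ring.
by rewrite !mulmx22; congr mx22; ring: hbc.
Qed.

Lemma mx22_diagonalize_row1 (R : comPzRingType) (a b c d l1 l2 : R) :
  a + d = l1 + l2 -> a * d - b * c = l1 * l2 ->
  mx22 a b c d *m mx22 (l1 - d) (l2 - d) c c =
  mx22 (l1 - d) (l2 - d) c c *m mx22 l1 0 0 l2.
Proof.
move=> ht hD; have ha : a = l1 + l2 - d by rewrite -ht addrK.
subst a; have hbc : b * c = (l1 + l2 - d) * d - l1 * l2 by rewrite -hD; ring.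
by rewrite !mulmx22; congr mx22; ring: hbc.
Qed.

(* The columns are the real and imaginary parts of the eigenvector
   (b, x + i y - a) for the eigenvalue x + i y. *)
Lemma mx22_rotation_similar (R : comPzRingType) (a b c d x y : R) :
  a + d = 2 * x -> a * d - b * c = x ^+ 2 + y ^+ 2 ->
  mx22 a b c d *m mx22 b 0 (x - a) y = mx22 b 0 (x - a) y *m mx22 x y (- y) x.
Proof.
move=> ht hD; have hd : d = 2 * x - a by rewrite -ht addrAC subrr add0r.
subst d; have hbc : b * c = a * (2 * x - a) - (x ^+ 2 + y ^+ 2) by rewrite -hD; ring.
by rewrite !mulmx22; congr mx22; ring: hbc.
Qed.

Lemma real_roots_of_discr_gt0 (R : rcfType) (t D : R) :
  0 < t ^+ 2 - 4 * D -> exists l1 l2 : R, [/\ l1 < l2, t = l1 + l2 & D = l1 * l2].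
Proof.
move=> hdisc; set s := Num.sqrt (t ^+ 2 - 4 * D).
have hs : s ^+ 2 = t ^+ 2 - 4 * D by rewrite sqr_sqrtr // ltW.
have s_gt0 : 0 < s by rewrite sqrtr_gt0.
exists ((t - s) / 2), ((t + s) / 2); split.
- by rewrite ltr_pM2r ?invr_gt0 //; lra.
- by field.
- by transitivity ((t ^+ 2 - s ^+ 2) / 4); [rewrite hs | ]; field.
Qed.

Lemma complex_roots_of_discr_lt0 (R : rcfType) (t D : R) :
  t ^+ 2 - 4 * D < 0 -> exists x y : R, [/\ 0 < y, t = 2 * x & D = x ^+ 2 + y ^+ 2].
Proof.
move=> hdisc; set x := t / 2.
have hy : 0 < D - x ^+ 2.
  by rewrite (_ : D - x ^+ 2 = (4 * D - t ^+ 2) / 4) ?divr_gt0 //; [lra | rewrite /x; field].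
exists x, (Num.sqrt (D - x ^+ 2)); split.
- by rewrite sqrtr_gt0.
- by rewrite /x; field.
- by rewrite sqr_sqrtr ?ltW //; ring.
Qed.

Definition WIC_weightable (R : realFieldType) p (A : 'M[R]_2) : Prop :=
  exists W : 'M[R]_2, W \in unitmx /\ WIC_weighted p W A.

Lemma WIC_weightable_similar (F : realFieldType) p (A P J : 'M[F]_2) :
  P \in unitmx -> A *m P = P *m J -> mu p J <= 0 -> WIC_weightable p A.
Proof.
move=> Pu AP hJ; exists (invmx P); split; first by rewrite unitmx_inv.
by rewrite /WIC_weighted invmxK -mulmxA AP mulmxA mulVmx // mul1mx.
Qed.

Section ConeToWIC.

Variables (R : rcfType) (p : pIndex) (a b c d : R).

Hypothesis cone_roots : forall z : R[i],
  z ^+ 2 - (a + d)%:C%C * z + (a * d - b * c)%:C%C = 0 -> in_cone z.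

Lemma real_eigenvalue_nonpos l1 l2 :
  a + d = l1 + l2 -> a * d - b * c = l1 * l2 -> l1 <= 0.
Proof.
move=> ht hD; have [] // := cone_roots (z := l1%:C%C).
by rewrite ht hD; ring.
Qed.

Lemma WIC_diagonal : b = 0 -> c = 0 -> WIC_weightable p (mx22 a b c d).
Proof.
move=> b0 c0; exists 1%:M; split; first exact: unitmx1.
have ha : a <= 0 by apply: (real_eigenvalue_nonpos (l2 := d)); rewrite // b0 c0; ring.
have hd : d <= 0 by apply: (real_eigenvalue_nonpos (l2 := a)); rewrite ?b0 ?c0; ring.
by rewrite /WIC_weighted invmx1 mul1mx mulmx1 b0 c0 mu_diag_mx22 ge_max ha hd.
Qed.

Lemma WIC_real_eigenvalues :
  0 < (a + d) ^+ 2 - 4 * (a * d - b * c) -> b != 0 \/ c != 0 ->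
  WIC_weightable p (mx22 a b c d).
Proof.
move=> /real_roots_of_discr_gt0[l1 [l2 [l12 ht hD]]] hbc.
have hJ : mu p (mx22 l1 0 0 l2) <= 0.
  rewrite mu_diag_mx22 ge_max (real_eigenvalue_nonpos ht hD).
  by rewrite (real_eigenvalue_nonpos (l2 := l1)) // ?(addrC l2) ?(mulrC l2).
have l12_neq0 : l1 - l2 != 0 by rewrite subr_eq0 lt_eqF.
case: hbc => [b0 | c0].
- apply: WIC_weightable_similar (mx22_diagonalize_row0 ht hD) hJ.
  by rewrite unitmx22 (_ : _ - _ = - b * (l1 - l2)) ?mulf_neq0 ?oppr_eq0 //; ring.
- apply: WIC_weightable_similar (mx22_diagonalize_row1 ht hD) hJ.
  by rewrite unitmx22 (_ : _ - _ = c * (l1 - l2)) ?mulf_neq0 //; ring.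
Qed.

Lemma WIC_complex_eigenvalues :
  (a + d) ^+ 2 - 4 * (a * d - b * c) < 0 -> WIC_weightable p (mx22 a b c d).
Proof.
move=> hdisc; have b0 : b != 0.
  by apply/eqP => b0; move: hdisc; rewrite b0 mul0r subr0; have := sqr_ge0 (a - d); nra.
have [x [y [y_gt0 ht hD]]] := complex_roots_of_discr_lt0 hdisc.
have [/= hx hy] : in_cone (x +i* y)%C.
  apply: cone_roots; apply/eqP; rewrite eq_complex /= ht hD.
  by apply/andP; split; apply/eqP; ring.
apply: WIC_weightable_similar (mx22_rotation_similar ht hD) _.
  by rewrite unitmx22 mul0r subr0 mulf_neq0 // gt_eqF.
by rewrite mu_rotation_mx22; lra.
Qed.

Lemma WIC_weightable_of_cone :
  ((a + d) ^+ 2 - 4 * (a * d - b * c) = 0 -> b = 0 /\ c = 0) ->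
  WIC_weightable p (mx22 a b c d).
Proof.
move=> hscalar.
have [[b0 c0] | hbc] : (b = 0 /\ c = 0) \/ (b != 0 \/ c != 0)
  by case: (eqVneq b 0); case: (eqVneq c 0); auto.
  exact: WIC_diagonal.
case: (ltgtP ((a + d) ^+ 2 - 4 * (a * d - b * c)) 0) => hdisc.
- exact: WIC_complex_eigenvalues.
- exact: WIC_real_eigenvalues.
- by have [b0 c0] := hscalar hdisc; case: hbc; rewrite b0 c0 eqxx.
Qed.

End ConeToWIC.

Lemma diagonalizable_scalar2 (F : fieldType) (A : 'M[F]_2) :
  diagonalizable A -> \tr A ^+ 2 - 4 * \det A = 0 -> is_scalar_mx A.
Proof.
case=> Q Qu /(diagonalizable_forP _ Qu) hQ hdisc.
have AM : A = invmx Q *m (Q *m A *m invmx Q) *m Q.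
  by rewrite !mulmxA mulVmx // mul1mx -mulmxA mulVmx // mulmx1.
move: hQ hdisc AM; rewrite -(mxtrace_conj A Qu) -(det_conj A Qu).
set M := Q *m A *m invmx Q => hQ hdisc ->.
have [M01 M10] : M 0 1 = 0 /\ M 1 0 = 0 by split; apply: hQ.
have M11 : M 1 1 = M 0 0.
  apply/eqP; rewrite -subr_eq0 -sqrf_eq0; apply/eqP.
  by rewrite -hdisc mxtrace2 det2 M01 M10; ring.
have -> : M = (M 0 0)%:M.
  by rewrite -[LHS]mx22K M01 M10 M11; apply/matrixP => -[[|[|//]] i] [[|[|//]] j]; rewrite !mxE.
by apply/is_scalar_mxP; exists (M 0 0); rewrite mul_mx_scalar -scalemxAl mulVmx // scalemx1.
Qed.

Lemma diagonalizable_complexify_discr0 (R : rcfType) (A : 'M[R]_2) :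
  diagonalizable (complexify A) -> \tr A ^+ 2 - 4 * \det A = 0 ->
  A 0 1 = 0 /\ A 1 0 = 0.
Proof.
move=> hdiag hdisc; have /is_scalar_mxP[z hz] : is_scalar_mx (complexify A).
  apply: diagonalizable_scalar2 hdiag _; rewrite mxtrace_map det_map_mx.
  by rewrite -(rmorph_nat (real_complex R) 4) -rmorphXn -rmorphM -rmorphB hdisc rmorph0.
have entry i j : (A i j)%:C%C = z *+ (i == j).
  by move/matrixP: hz => /(_ i j); rewrite !mxE.
by split; apply: complexI; rewrite entry rmorph0.
Qed.

Theorem mainTheorem3 (R : rcfType) (A : 'M[R]_2) (p : pIndex) :
  diagonalizable (complexify A) ->
  ((exists W : 'M[R]_2, W \in unitmx /\ WIC_weighted p W A) <->
   (forall z : R[i], eigenvalue (complexify A) z -> in_cone z)).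
Proof.
move=> hdiag; split.
  case=> W [Wu hW] z; rewrite eigenvalue_complexify => /eqP.
  have [] := mu_nonpos_trace_det hW; rewrite mxtrace_conj // det_conj //.
  exact: root_in_cone.
move=> hcone.
have hroots (z : R[i]) : z ^+ 2 - (\tr A)%:C%C * z + (\det A)%:C%C = 0 -> in_cone z.
  by move=> hz; apply: hcone; rewrite eigenvalue_complexify hz.
have hscalar := diagonalizable_complexify_discr0 hdiag.
rewrite mxtrace2 det2 in hroots hscalar; rewrite -[A]mx22K.
exact: WIC_weightable_of_cone.
Qed.
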